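(* Let $X$ be an infinite dimensional Banach space. Then $$c_0(X) - \bigcup_{p>0}\ell_p^w(X)$$ is maximal spaceable in $c_0(X)$, i.e. $\big(c_0(X)\setminus \bigcup_{p>0}\ell_p^w(X)\big)\cup\{0\}$ contains a closed linear subspace of $c_0(X)$ of dimension $\dim c_0(X)$.
   Context: $\mathbb{K}=\mathbb{R}$ or $\mathbb{C}$. $c_0(X)$ is the Banach space of $X$-valued sequences converging in norm to $0$, with the sup norm. For $0<p<\infty$, $\ell_p^w(X)$ is the space of weakly $p$-summable $X$-valued sequences, i.e. sequences $(x_n)$ with $(\varphi(x_n))_n\in\ell_p$ for every $\varphi\in X'$ (the topological dual). For sets $A,B$ of $X$-valued sequences, $A-B:=A\setminus B$. A subset $A$ of a topological vector space $V$ is maximal spaceable if $A\cup\{0\}$ contains a closed linear subspace of $V$ of dimension $\dim V$. *)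

From Stdlib Require Import Reals List.
Open Scope R_scope.

Inductive field_kind := RealField | ComplexField.

Record cplx := Cplx { re : R; im : R }.
Definition cadd (z w : cplx) := Cplx (re z + re w) (im z + im w).
Definition cmul (z w : cplx) :=
  Cplx (re z * re w - im z * im w) (re z * im w + im z * re w).
Definition copp (z : cplx) := Cplx (- re z) (- im z).
Definition cabs (z : cplx) := sqrt (re z * re z + im z * im z).

Definition scal (k : field_kind) : Type :=
  match k with RealField => R | ComplexField => cplx end.

Definition kzero (k : field_kind) : scal k :=
  match k return scal k with RealField => 0 | ComplexField => Cplx 0 0 end.
Definition kone (k : field_kind) : scal k :=
  match k return scal k with RealField => 1 | ComplexField => Cplx 1 0 end.
Definition kadd (k : field_kind) : scal k -> scal k -> scal k :=
  match k return scal k -> scal k -> scal k with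
  | RealField => Rplus | ComplexField => cadd end.
Definition kmul (k : field_kind) : scal k -> scal k -> scal k :=
  match k return scal k -> scal k -> scal k with
  | RealField => Rmult | ComplexField => cmul end.
Definition kopp (k : field_kind) : scal k -> scal k :=
  match k return scal k -> scal k with
  | RealField => Ropp | ComplexField => copp end.
Definition kabs (k : field_kind) : scal k -> R :=
  match k return scal k -> R with
  | RealField => Rabs | ComplexField => cabs end.

Record NormedSpace (k : field_kind) := {
  carrier :> Type;
  vzero : carrier;
  vadd : carrier -> carrier -> carrier;
  vopp : carrier -> carrier;
  vscal : scal k -> carrier -> carrier;
  vnorm : carrier -> R }.
Arguments vzero {k} n.
Arguments vadd {k n}.
Arguments vopp {k n}.
Arguments vscal {k n}.
Arguments vnorm {k n}.

Definition is_vector_space {k} (X : NormedSpace k) : Prop :=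
  (forall x y z : X, vadd x (vadd y z) = vadd (vadd x y) z) /\
  (forall x y : X, vadd x y = vadd y x) /\
  (forall x : X, vadd x (vzero X) = x) /\
  (forall x : X, vadd x (vopp x) = vzero X) /\
  (forall (a b : scal k) (x : X), vscal a (vscal b x) = vscal (kmul k a b) x) /\
  (forall x : X, vscal (kone k) x = x) /\
  (forall (a : scal k) (x y : X), vscal a (vadd x y) = vadd (vscal a x) (vscal a y)) /\
  (forall (a b : scal k) (x : X), vscal (kadd k a b) x = vadd (vscal a x) (vscal b x)).

Definition is_norm {k} (X : NormedSpace k) : Prop :=
  (forall x : X, vnorm x = 0 -> x = vzero X) /\
  (forall (a : scal k) (x : X), vnorm (vscal a x) = kabs k a * vnorm x) /\
  (forall x y : X, vnorm (vadd x y) <= vnorm x + vnorm y).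

Definition is_complete {k} (X : NormedSpace k) : Prop :=
  forall u : nat -> X,
    (forall eps, eps > 0 -> exists N, forall m n, (N <= m)%nat -> (N <= n)%nat ->
       vnorm (vadd (u m) (vopp (u n))) < eps) ->
    exists l : X, forall eps, eps > 0 -> exists N, forall n, (N <= n)%nat ->
       vnorm (vadd (u n) (vopp l)) < eps.

Definition is_banach {k} (X : NormedSpace k) : Prop :=
  is_vector_space X /\ is_norm X /\ is_complete X.

Definition lincomb {k} {V : Type} (zero : V) (add : V -> V -> V)
  (sc : scal k -> V -> V) (l : list (scal k * V)) : V :=
  fold_right (fun p acc => add (sc (fst p) (snd p)) acc) zero l.

Definition in_span {k} {V : Type} (zero : V) (add : V -> V -> V)
  (sc : scal k -> V -> V) (B : V -> Prop) (x : V) : Prop :=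
  exists l : list (scal k * V),
    Forall (fun p => B (snd p)) l /\ x = lincomb zero add sc l.

Definition lin_indep {k} {V : Type} (zero : V) (add : V -> V -> V)
  (sc : scal k -> V -> V) (B : V -> Prop) : Prop :=
  forall l : list (scal k * V),
    NoDup (map snd l) -> Forall (fun p => B (snd p)) l ->
    lincomb zero add sc l = zero -> Forall (fun p => fst p = kzero k) l.

Definition is_hamel_basis {k} {V : Type} (zero : V) (add : V -> V -> V)
  (sc : scal k -> V -> V) (W B : V -> Prop) : Prop :=
  (forall x, B x -> W x) /\ lin_indep zero add sc B /\
  (forall x, W x -> in_span zero add sc B x).

Definition same_dim {k} {V : Type} (zero : V) (add : V -> V -> V)
  (sc : scal k -> V -> V) (W1 W2 : V -> Prop) : Prop :=
  exists B1 B2 : V -> Prop,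
    is_hamel_basis zero add sc W1 B1 /\ is_hamel_basis zero add sc W2 B2 /\
    exists f : {x | B1 x} -> {y | B2 y},
      (forall a b, f a = f b -> a = b) /\ (forall c, exists a, f a = c).

Definition infinite_dimensional {k} (X : NormedSpace k) : Prop :=
  ~ exists l : list X,
      forall x : X, in_span (vzero X) vadd vscal (fun y => In y l) x.

Definition seq_zero {k} (X : NormedSpace k) : nat -> X := fun _ => vzero X.
Definition seq_add {k} {X : NormedSpace k} (u v : nat -> X) : nat -> X :=
  fun n => vadd (u n) (v n).
Definition seq_scal {k} {X : NormedSpace k} (a : scal k) (u : nat -> X) : nat -> X :=
  fun n => vscal a (u n).

Definition in_c0 {k} (X : NormedSpace k) (u : nat -> X) : Prop :=
  forall eps, eps > 0 -> exists N, forall n, (N <= n)%nat -> vnorm (u n) < eps.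

Definition sup_cv {k} {X : NormedSpace k} (w : nat -> nat -> X) (u : nat -> X) : Prop :=
  forall eps, eps > 0 -> exists N, forall n, (N <= n)%nat ->
    forall j, vnorm (vadd (w n j) (vopp (u j))) <= eps.

(** [W] is a closed linear subspace of c_0(X) (sup-norm topology, which is
    metrizable, so closed = sequentially closed). *)
Definition closed_subspace_c0 {k} (X : NormedSpace k) (W : (nat -> X) -> Prop) : Prop :=
  (forall u, W u -> in_c0 X u) /\
  W (seq_zero X) /\
  (forall u v, W u -> W v -> W (seq_add u v)) /\
  (forall a u, W u -> W (seq_scal a u)) /\
  (forall w u, (forall n, W (w n)) -> in_c0 X u -> sup_cv w u -> W u).

Definition continuous_linear_functional {k} (X : NormedSpace k) (phi : X -> scal k) : Prop :=
  (forall x y : X, phi (vadd x y) = kadd k (phi x) (phi y)) /\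
  (forall (a : scal k) (x : X), phi (vscal a x) = kmul k a (phi x)) /\
  (forall (x : X) eps, eps > 0 -> exists delta, delta > 0 /\
     forall y : X, vnorm (vadd y (vopp x)) < delta ->
       kabs k (kadd k (phi y) (kopp k (phi x))) < eps).

(** a^p for a >= 0 and real p > 0 (with 0^p = 0). *)
Definition rpow (a p : R) : R := if Rle_dec a 0 then 0 else Rpower a p.

Definition in_lp {k} (p : R) (a : nat -> scal k) : Prop :=
  exists l, Un_cv (fun n => sum_f_R0 (fun i => rpow (kabs k (a i)) p) n) l.

Definition weakly_p_summable {k} (X : NormedSpace k) (p : R) (u : nat -> X) : Prop :=
  forall phi : X -> scal k, continuous_linear_functional X phi ->
    in_lp p (fun n => phi (u n)).

Definition c0_minus_weak {k} (X : NormedSpace k) (u : nat -> X) : Prop :=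
  in_c0 X u /\ ~ (exists p, p > 0 /\ weakly_p_summable X p u).

Definition maximal_spaceable_c0 {k} (X : NormedSpace k) (A : (nat -> X) -> Prop) : Prop :=
  exists W : (nat -> X) -> Prop,
    closed_subspace_c0 X W /\
    (forall u, W u -> A u \/ u = seq_zero X) /\
    same_dim (seq_zero X) seq_add seq_scal W (in_c0 X).

(** Fix a weight [alpha] on the
  naturals decreasing to 0 more slowly than any power of [1/i], namely
  [alpha i = exp (- sqrt (ln (i + 1)))], and enumerate N x N by the Cantor
  pairing [m = (i, j)].  The map [spread]
        spread u (i, j) = alpha i * u j
  is an injective linear map from c_0(X) into c_0(X); its image [W] is closed,
  since [v] lies in [W] exactly when [v (i, j) = alpha i * v (0, j)] for all
  [(i, j)].  If [spread u <> 0], pick [u j <> 0] and (Hahn-Banach) a continuous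
  functional [phi] with [phi (u j) <> 0]; then the column [j] contributes
  [sum_i (alpha i |phi (u j)|)^p = +oo] for every [p > 0], so [spread u]
  is not weakly p-summable.  Finally, [spread] maps a Hamel basis of c_0(X) bijectively
  onto a Hamel basis of [W], so [W] has the dimension of c_0(X). *)

From Stdlib Require Import Reals List Lra Lia Psatz Cantor.
From Stdlib Require Import Classical ClassicalEpsilon FunctionalExtensionality ProofIrrelevance.
From mathcomp Require classical_sets.
Open Scope R_scope.

Definition kreal (k : field_kind) (t : R) : scal k :=
  match k return scal k with RealField => t | ComplexField => Cplx t 0 end.

Lemma cplx_eq a b c d : a = c -> b = d -> Cplx a b = Cplx c d.
Proof. intros -> ->; reflexivity. Qed.

Ltac case_field k := destruct k; simpl in *.

Lemma kmul_comm k (a b : scal k) : kmul k a b = kmul k b a.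
Proof. case_field k. ring. destruct a, b; unfold cmul; simpl; apply cplx_eq; ring. Qed.
Lemma kadd_comm k (a b : scal k) : kadd k a b = kadd k b a.
Proof. case_field k. ring. destruct a, b; unfold cadd; simpl; apply cplx_eq; ring. Qed.
Lemma kadd_0l k (a : scal k) : kadd k (kzero k) a = a.
Proof. case_field k. ring. destruct a; unfold cadd; simpl; apply cplx_eq; ring. Qed.
Lemma kadd_0r k (a : scal k) : kadd k a (kzero k) = a.
Proof. rewrite kadd_comm. apply kadd_0l. Qed.
Lemma kadd_opp k (a : scal k) : kadd k a (kopp k a) = kzero k.
Proof. case_field k. ring. destruct a; unfold cadd, copp; simpl; apply cplx_eq; ring. Qed.

Lemma kreal_mul k a b : kmul k (kreal k a) (kreal k b) = kreal k (a * b).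
Proof. case_field k. ring. unfold cmul; simpl; apply cplx_eq; ring. Qed.
Lemma kreal_add k a b : kadd k (kreal k a) (kreal k b) = kreal k (a + b).
Proof. case_field k. ring. unfold cadd; simpl; apply cplx_eq; ring. Qed.
Lemma kreal_one k : kreal k 1 = kone k.
Proof. case_field k; reflexivity. Qed.
Lemma kreal_zero k : kreal k 0 = kzero k.
Proof. case_field k; reflexivity. Qed.
Lemma kreal_opp1 k : kreal k (-1) = kopp k (kone k).
Proof. case_field k. reflexivity. unfold copp; simpl; apply cplx_eq; ring. Qed.

Lemma kabs_nonneg k (a : scal k) : 0 <= kabs k a.
Proof. case_field k. apply Rabs_pos. unfold cabs. apply sqrt_pos. Qed.

Lemma kabs_kreal k t : kabs k (kreal k t) = Rabs t.
Proof.
  case_field k. reflexivity. unfold cabs; simpl.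
  replace (t * t + 0 * 0) with (Rsqr t) by (unfold Rsqr; ring).
  apply sqrt_Rsqr_abs.
Qed.

Lemma kabs_mul k (a b : scal k) : kabs k (kmul k a b) = kabs k a * kabs k b.
Proof.
  case_field k. apply Rabs_mult. destruct a as [a1 a2], b as [b1 b2]; unfold cabs, cmul; simpl.
  rewrite <- sqrt_mult_alt by nra. f_equal. ring.
Qed.

Lemma kabs_zero k : kabs k (kzero k) = 0.
Proof. rewrite <- kreal_zero, kabs_kreal. apply Rabs_R0. Qed.
Lemma kabs_opp1 k : kabs k (kopp k (kone k)) = 1.
Proof. rewrite <- kreal_opp1, kabs_kreal. unfold Rabs; destruct Rcase_abs; lra. Qed.

Lemma kinv k (a : scal k) : a <> kzero k -> exists b, kmul k b a = kone k.
Proof.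
  case_field k; intros Ha.
  - exists (/ a). field. exact Ha.
  - destruct a as [p q]. assert (Hn : p * p + q * q <> 0).
    { intro E. apply Ha. assert (p = 0) by nra. assert (q = 0) by nra. subst; reflexivity. }
    exists (Cplx (p / (p*p+q*q)) (- q / (p*p+q*q))). unfold cmul; simpl.
    apply cplx_eq; field; exact Hn.
Qed.

Lemma cabs_re a b : Rabs a <= cabs (Cplx a b).
Proof.
  unfold cabs; simpl. rewrite <- sqrt_Rsqr_abs. apply sqrt_le_1_alt.
  unfold Rsqr. nra.
Qed.

Lemma cabs_le a b : cabs (Cplx a b) <= Rabs a + Rabs b.
Proof.
  unfold cabs; simpl.
  rewrite <- (sqrt_Rsqr (Rabs a + Rabs b)) by (pose proof (Rabs_pos a); pose proof (Rabs_pos b); lra).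
  apply sqrt_le_1_alt. unfold Rsqr.
  assert (a * a = Rabs a * Rabs a) by (unfold Rabs; destruct Rcase_abs; ring).
  assert (b * b = Rabs b * Rabs b) by (unfold Rabs; destruct Rcase_abs; ring).
  pose proof (Rabs_pos a); pose proof (Rabs_pos b). nra.
Qed.

Section VectorSpace.
Variable k : field_kind.
Variable X : NormedSpace k.
Hypothesis HV : is_vector_space X.

Lemma vadd_assoc (x y z : X) : vadd x (vadd y z) = vadd (vadd x y) z.
Proof. apply HV. Qed.
Lemma vadd_comm (x y : X) : vadd x y = vadd y x.
Proof. apply HV. Qed.
Lemma vadd_0r (x : X) : vadd x (vzero X) = x.
Proof. apply HV. Qed.
Lemma vadd_oppr (x : X) : vadd x (vopp x) = vzero X.
Proof. apply HV. Qed.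
Lemma vscal_mul a b (x : X) : vscal a (vscal b x) = vscal (kmul k a b) x.
Proof. apply HV. Qed.
Lemma vscal_1 (x : X) : vscal (kone k) x = x.
Proof. apply HV. Qed.
Lemma vscal_addr a (x y : X) : vscal a (vadd x y) = vadd (vscal a x) (vscal a y).
Proof. apply HV. Qed.
Lemma vscal_addl a b (x : X) : vscal (kadd k a b) x = vadd (vscal a x) (vscal b x).
Proof. apply HV. Qed.

Lemma vadd_0l (x : X) : vadd (vzero X) x = x.
Proof. rewrite vadd_comm; apply vadd_0r. Qed.
Lemma vadd_oppl (x : X) : vadd (vopp x) x = vzero X.
Proof. rewrite vadd_comm; apply vadd_oppr. Qed.

Lemma vadd_cancel (x y z : X) : vadd x y = vadd x z -> y = z.
Proof.
  intro H. rewrite <- (vadd_0l y), <- (vadd_0l z), <- (vadd_oppl x), <- !vadd_assoc, H.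
  reflexivity.
Qed.

Lemma vscal_0 (x : X) : vscal (kzero k) x = vzero X.
Proof.
  apply (vadd_cancel (vscal (kzero k) x)).
  rewrite vadd_0r, <- vscal_addl, kadd_0l. reflexivity.
Qed.
Lemma vscal_v0 a : vscal a (vzero X) = vzero X.
Proof.
  apply (vadd_cancel (vscal a (vzero X))). rewrite vadd_0r, <- vscal_addr, vadd_0r. reflexivity.
Qed.

Lemma vopp_unique (x y : X) : vadd x y = vzero X -> y = vopp x.
Proof. intro H. apply (vadd_cancel x). rewrite H, vadd_oppr. reflexivity. Qed.

Lemma vopp_scal (x : X) : vopp x = vscal (kopp k (kone k)) x.
Proof.
  symmetry. apply vopp_unique. rewrite <- (vscal_1 x) at 1.
  rewrite <- vscal_addl, kadd_opp. apply vscal_0.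
Qed.

Lemma vopp_add (x y : X) : vopp (vadd x y) = vadd (vopp x) (vopp y).
Proof. rewrite !vopp_scal. apply vscal_addr. Qed.
Lemma vopp_opp (x : X) : vopp (vopp x) = x.
Proof. symmetry. apply vopp_unique. apply vadd_oppl. Qed.
Lemma vscal_opp a (x : X) : vscal a (vopp x) = vopp (vscal a x).
Proof. rewrite !vopp_scal, !vscal_mul, kmul_comm. reflexivity. Qed.

Lemma vadd_ACA (a b c d : X) : vadd (vadd a b) (vadd c d) = vadd (vadd a c) (vadd b d).
Proof. rewrite <- !vadd_assoc. f_equal. rewrite !vadd_assoc. f_equal. apply vadd_comm. Qed.

Lemma vsub_eq0 (x y : X) : vadd x (vopp y) = vzero X -> x = y.
Proof.
  intro H. rewrite <- (vopp_opp y), (vopp_unique _ _ H), vopp_opp. reflexivity.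
Qed.

Lemma vsub_scal a (x y : X) :
  vscal a (vadd x (vopp y)) = vadd (vscal a x) (vopp (vscal a y)).
Proof. rewrite vscal_addr, vscal_opp. reflexivity. Qed.

Lemma vsub_chasles (x y z : X) :
  vadd x (vopp z) = vadd (vadd x (vopp y)) (vadd y (vopp z)).
Proof. rewrite <- vadd_assoc, (vadd_assoc (vopp y)), vadd_oppl, vadd_0l. reflexivity. Qed.

Hypothesis HN : is_norm X.

Lemma vnorm_scal a (x : X) : vnorm (vscal a x) = kabs k a * vnorm x.
Proof. apply HN. Qed.
Lemma vnorm_triangle (x y : X) : vnorm (vadd x y) <= vnorm x + vnorm y.
Proof. apply HN. Qed.

Lemma vnorm_zero : vnorm (vzero X) = 0.
Proof. rewrite <- (vscal_0 (vzero X)), vnorm_scal, kabs_zero. ring. Qed.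
Lemma vnorm_opp (x : X) : vnorm (vopp x) = vnorm x.
Proof. rewrite vopp_scal, vnorm_scal, kabs_opp1. ring. Qed.
Lemma vnorm_nonneg (x : X) : 0 <= vnorm x.
Proof. pose proof (vnorm_triangle x (vopp x)). rewrite vadd_oppr, vnorm_zero, vnorm_opp in H. lra. Qed.

Lemma vnorm_sub_sym (x y : X) : vnorm (vadd x (vopp y)) = vnorm (vadd y (vopp x)).
Proof. rewrite <- vnorm_opp, vopp_add, vopp_opp, vadd_comm. reflexivity. Qed.

Lemma vnorm_sub_triangle (x y z : X) :
  vnorm (vadd x (vopp z)) <= vnorm (vadd x (vopp y)) + vnorm (vadd y (vopp z)).
Proof. rewrite (vsub_chasles x y z). apply vnorm_triangle. Qed.

Lemma vnorm_small_eq (x y : X) :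
  (forall eps, eps > 0 -> vnorm (vadd x (vopp y)) <= eps) -> x = y.
Proof.
  intro H. apply vsub_eq0, HN. pose proof (vnorm_nonneg (vadd x (vopp y))).
  destruct (Req_dec (vnorm (vadd x (vopp y))) 0) as [E|E]; auto.
  specialize (H (vnorm (vadd x (vopp y)) / 2) ltac:(lra)). lra.
Qed.

Lemma vnorm_pos (x : X) : x <> vzero X -> vnorm x > 0.
Proof.
  intro H. pose proof (vnorm_nonneg x). destruct (Req_dec (vnorm x) 0) as [E|E].
  - exfalso; apply H, HN, E.
  - lra.
Qed.

(** Scaling by real numbers, the structure used by the real Hahn-Banach argument. *)
Definition rscal (t : R) (x : X) : X := vscal (kreal k t) x.

Lemma rscal_addl a b x : rscal (a + b) x = vadd (rscal a x) (rscal b x).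
Proof. unfold rscal. rewrite <- kreal_add. apply vscal_addl. Qed.
Lemma rscal_addr a x y : rscal a (vadd x y) = vadd (rscal a x) (rscal a y).
Proof. apply vscal_addr. Qed.
Lemma rscal_mul a b x : rscal a (rscal b x) = rscal (a * b) x.
Proof. unfold rscal. rewrite vscal_mul, kreal_mul. reflexivity. Qed.
Lemma rscal_1 x : rscal 1 x = x.
Proof. unfold rscal. rewrite kreal_one. apply vscal_1. Qed.
Lemma rscal_0 x : rscal 0 x = vzero X.
Proof. unfold rscal. rewrite kreal_zero. apply vscal_0. Qed.
Lemma rscal_norm a x : vnorm (rscal a x) = Rabs a * vnorm x.
Proof. unfold rscal. rewrite vnorm_scal, kabs_kreal. reflexivity. Qed.
Lemma rscal_m1 x : rscal (-1) x = vopp x.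
Proof. unfold rscal. rewrite kreal_opp1, vopp_scal. reflexivity. Qed.
Lemma rscal_opp a x : rscal (- a) x = vopp (rscal a x).
Proof. rewrite <- rscal_m1, rscal_mul. f_equal. ring. Qed.
Lemma rscal_vopp a x : rscal a (vopp x) = vopp (rscal a x).
Proof. apply vscal_opp. Qed.

End VectorSpace.

Lemma zorn_sets (T : Type) (P : (T -> Prop) -> Prop) :
  (forall F : (T -> Prop) -> Prop, (forall A, F A -> P A) ->
     (forall A B, F A -> F B -> (forall x, A x -> B x) \/ (forall x, B x -> A x)) ->
     P (fun x => exists2 A, F A & A x)) ->
  exists A, P A /\ forall B, (forall x, A x -> B x) -> P B -> forall x, B x -> A x.
Proof.
  intro H. destruct (@classical_sets.Zorn_bigcup T P) as [A [PA HA]].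
  - intros F HF Ht. apply H; auto.
  - exists A; split; auto. intros B AB PB.
    apply NNPP; intro NB. apply (HA B); auto. split; auto.
Qed.

(** ** Hahn-Banach: a nonzero vector is detected by a continuous functional *)

Section HahnBanach.
Variable k : field_kind.
Variable X : NormedSpace k.
Hypothesis HV : is_vector_space X.
Hypothesis HN : is_norm X.

Local Notation rscal := (rscal k X).

(** [G] is the graph of a real-linear functional, defined on a real subspace
    of [X] and dominated by the norm. *)
Definition dominated_graph (G : X * R -> Prop) : Prop :=
  (forall y a b, G (y, a) -> G (y, b) -> a = b) /\
  (forall y a z b, G (y, a) -> G (z, b) -> G (vadd y z, a + b)) /\
  (forall y a t, G (y, a) -> G (rscal t y, t * a)) /\
  (forall y a, G (y, a) -> a <= vnorm y) /\
  G (vzero X, 0).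

Lemma dominated_graph_ext G H :
  (forall p, G p <-> H p) -> dominated_graph G -> dominated_graph H.
Proof.
  intros E [h1 [h2 [h3 [h4 h5]]]]. repeat split.
  - intros y a b Ha Hb. apply E in Ha, Hb. eauto.
  - intros y a z b Ha Hb. apply E. apply E in Ha, Hb. eauto.
  - intros y a t Ha. apply E. apply E in Ha. eauto.
  - intros y a Ha. apply E in Ha. eauto.
  - apply E; auto.
Qed.

(** Being a dominated graph only involves two points at a time: a relation
    whose points lie pairwise in a common dominated subgraph is dominated. *)
Lemma dominated_graph_pairwise (U : X * R -> Prop) :
  U (vzero X, 0) ->
  (forall p q, U p -> U q ->
     exists H, dominated_graph H /\ H p /\ H q /\ forall r, H r -> U r) ->
  dominated_graph U.
Proof.
  intros U0 two. repeat split; auto.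
  - intros y a b Ha Hb. destruct (two _ _ Ha Hb) as [H [[h1 _] [H1 [H2 _]]]]. eauto.
  - intros y a z b Ha Hb. destruct (two _ _ Ha Hb) as [H [[_ [h2 _]] [H1 [H2 H3]]]]. eauto.
  - intros y a t Ha. destruct (two _ _ Ha Ha) as [H [[_ [_ [h3 _]]] [H1 [_ H3]]]]. eauto.
  - intros y a Ha. destruct (two _ _ Ha Ha) as [H [[_ [_ [_ [h4 _]]]] [H1 _]]]. eauto.
Qed.

Section OneStep.
Variable M : X * R -> Prop.
Hypothesis HM : dominated_graph M.
Variable z : X.

Lemma extension_value : exists c,
  (forall w g, M (w, g) -> g - vnorm (vadd w (vopp z)) <= c) /\
  (forall w g, M (w, g) -> c <= vnorm (vadd w z) - g).
Proof.
  destruct HM as [_ [m2 [_ [m4 m0]]]].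
  set (S := fun r => exists w g, M (w, g) /\ r = g - vnorm (vadd w (vopp z))).
  assert (lower_upper : forall w g w' g', M (w, g) -> M (w', g') ->
             g - vnorm (vadd w (vopp z)) <= vnorm (vadd w' z) - g').
  { intros w g w' g' Hw Hw'. pose proof (m4 _ _ (m2 _ _ _ _ Hw Hw')) as Hdom.
    rewrite <- (vadd_0r _ X HV w), <- (vadd_oppl _ X HV z), (vadd_assoc _ X HV w),
      <- (vadd_assoc _ X HV _ z w'), (vadd_comm _ X HV z w') in Hdom.
    pose proof (vnorm_triangle _ X HN (vadd w (vopp z)) (vadd w' z)). lra. }
  assert (Sbound : bound S).
  { exists (vnorm (vadd (vzero X) z) - 0). intros r [w [g [Hw ->]]]. apply lower_upper; auto. }
  assert (Sne : exists r, S r).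
  { exists (0 - vnorm (vadd (vzero X) (vopp z))). exists (vzero X), 0; auto. }
  destruct (completeness S Sbound Sne) as [c [cub club]]. exists c. split.
  - intros w g Hw. apply cub. exists w, g; auto.
  - intros w g Hw. apply club. intros r [w' [g' [Hw' ->]]]. apply lower_upper; auto.
Qed.

Variable c : R.
Hypothesis Hc_lower : forall w g, M (w, g) -> g - vnorm (vadd w (vopp z)) <= c.
Hypothesis Hc_upper : forall w g, M (w, g) -> c <= vnorm (vadd w z) - g.

Definition extension (p : X * R) : Prop :=
  exists y g t, M (y, g) /\ p = (vadd y (rscal t z), g + t * c).

(** For [t <> 0], [y + t z = t (y / t + z)]: rescaling a point of [M] reduces
    the domination of the extension to the two bounds on [c]. *)
Lemma extension_dominated y g t : M (y, g) -> g + t * c <= vnorm (vadd y (rscal t z)).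
Proof.
  destruct HM as [_ [_ [m3 [m4 _]]]]. intro Hy.
  assert (factor : t <> 0 -> vadd y (rscal t z) = rscal t (vadd (rscal (/ t) y) z)).
  { intro Ht. rewrite (rscal_addr _ X HV), (rscal_mul _ X HV).
    replace (t * / t) with 1 by (field; auto). rewrite (rscal_1 _ X HV). reflexivity. }
  destruct (Rtotal_order t 0) as [Tn|[T0|Tp]].
  - pose proof (Hc_lower _ _ (m3 _ _ (- / t) Hy)) as C.
    assert (Efactor : vadd y (rscal t z) = rscal (- t) (vadd (rscal (- / t) y) (vopp z))).
    { rewrite (rscal_addr _ X HV), (rscal_mul _ X HV).
      replace (- t * - / t) with 1 by (field; lra). rewrite (rscal_1 _ X HV).
      rewrite (rscal_vopp _ X HV), (rscal_opp _ X HV), (vopp_opp _ X HV). reflexivity. }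
    rewrite Efactor, (rscal_norm _ X HN), Rabs_pos_eq by lra.
    assert (- t * (- / t * g - vnorm (vadd (rscal (- / t) y) (vopp z))) <= - t * c)
      by (apply Rmult_le_compat_l; lra).
    replace (- t * (- / t * g - vnorm (vadd (rscal (- / t) y) (vopp z))))
      with (g - - t * vnorm (vadd (rscal (- / t) y) (vopp z))) in H by (field; lra). lra.
  - subst t. rewrite (rscal_0 _ X HV), (vadd_0r _ X HV).
    replace (g + 0 * c) with g by ring. auto.
  - pose proof (Hc_upper _ _ (m3 _ _ (/ t) Hy)) as C.
    rewrite factor, (rscal_norm _ X HN), Rabs_pos_eq by lra.
    assert (t * c <= t * (vnorm (vadd (rscal (/ t) y) z) - / t * g))
      by (apply Rmult_le_compat_l; lra).
    replace (t * (vnorm (vadd (rscal (/ t) y) z) - / t * g))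
      with (t * vnorm (vadd (rscal (/ t) y) z) - g) in H by (field; lra). lra.
Qed.

(** If [z] is not yet in the domain of [M], the extension is again the graph
    of a function: two representations [y1 + t1 z = y2 + t2 z] with [t1 <> t2]
    would put [z] in the domain of [M]. *)
Lemma extension_functional : (forall a, ~ M (z, a)) ->
  forall y a b, extension (y, a) -> extension (y, b) -> a = b.
Proof.
  destruct HM as [m1 [m2 [m3 _]]]. intros Hz y a b [y1 [g1 [t1 [H1 E1]]]] [y2 [g2 [t2 [H2 E2]]]].
  injection E1 as E1a E1b. injection E2 as E2a E2b. subst a b.
  destruct (Req_dec t1 t2) as [Et|Nt].
  - subst t2. rewrite E1a in E2a.
    rewrite !(vadd_comm _ X HV _ (rscal t1 z)) in E2a. apply (vadd_cancel _ X HV) in E2a.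
    subst y2. rewrite (m1 _ _ _ H1 H2). reflexivity.
  - exfalso. apply (Hz (/ (t2 - t1) * (g1 + (-1) * g2))).
    assert (Ediff : vadd y1 (vopp y2) = rscal (t2 - t1) z).
    { apply (vadd_cancel _ X HV (rscal t1 z)).
      rewrite (vadd_comm _ X HV (rscal t1 z) (vadd y1 (vopp y2))),
        <- (vadd_assoc _ X HV y1), (vadd_comm _ X HV (vopp y2)), (vadd_assoc _ X HV y1), <- E1a, E2a,
        <- (vadd_assoc _ X HV y2), (vadd_comm _ X HV y2), <- (vadd_assoc _ X HV),
        (vadd_oppl _ X HV), (vadd_0r _ X HV), <- (rscal_addl _ X HV).
      f_equal. ring. }
    replace z with (rscal (/ (t2 - t1)) (vadd y1 (rscal (-1) y2))).
    + apply m3. apply m2; auto.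
    + rewrite (rscal_m1 _ X HV), Ediff, (rscal_mul _ X HV).
      replace (/ (t2 - t1) * (t2 - t1)) with 1 by (field; lra). apply (rscal_1 _ X HV).
Qed.

Lemma extension_dominated_graph : (forall a, ~ M (z, a)) -> dominated_graph extension.
Proof.
  intro Hz. destruct HM as [m1 [m2 [m3 [m4 m5]]]]. split; [|split; [|split; [|split]]].
  - apply extension_functional; auto.
  - intros y a w b [y1 [g1 [t1 [H1 E1]]]] [y2 [g2 [t2 [H2 E2]]]].
    injection E1 as -> ->. injection E2 as -> ->.
    exists (vadd y1 y2), (g1 + g2), (t1 + t2). split; auto.
    f_equal; [|ring]. rewrite (rscal_addl _ X HV). apply (vadd_ACA _ X HV).
  - intros y a s [y1 [g1 [t1 [H1 E1]]]]. injection E1 as -> ->.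
    exists (rscal s y1), (s * g1), (s * t1). split; auto.
    f_equal; [|ring]. rewrite (rscal_addr _ X HV), (rscal_mul _ X HV). reflexivity.
  - intros y a [y1 [g1 [t1 [H1 E1]]]]. injection E1 as -> ->.
    apply extension_dominated; auto.
  - exists (vzero X), 0, 0. split; auto.
    rewrite (rscal_0 _ X HV), (vadd_0r _ X HV). f_equal; ring.
Qed.

Lemma extension_contains p : M p -> extension p.
Proof.
  destruct p as [y g]. intro H. exists y, g, 0. split; auto.
  rewrite (rscal_0 _ X HV), (vadd_0r _ X HV). f_equal; ring.
Qed.

Lemma extension_new_point : M (vzero X, 0) -> extension (z, c).
Proof.
  intro H0. exists (vzero X), 0, 1. split; auto.
  rewrite (rscal_1 _ X HV), (vadd_0l _ X HV). f_equal; ring.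
Qed.

End OneStep.

Section Seed.
Variable x0 : X.
Hypothesis Hx0 : x0 <> vzero X.

Definition seed_graph (p : X * R) : Prop := exists t, p = (rscal t x0, t * vnorm x0).

(** [x0 <> 0] makes the seed a graph; it is dominated since [|t| ||x0|| = ||t x0||]. *)
Lemma seed_dominated : dominated_graph seed_graph.
Proof.
  pose proof (vnorm_pos _ X HV HN x0 Hx0) as Hp.
  repeat split.
  - intros y a b [t Ht] [s Hs]. injection Ht as Ht1 Ht2. injection Hs as Hs1 Hs2. subst.
    assert (E : rscal (t - s) x0 = vzero X).
    { unfold Rminus. rewrite (rscal_addl _ X HV), (rscal_opp _ X HV), Hs1. apply (vadd_oppr _ X HV). }
    assert (Hn := rscal_norm _ X HN (t - s) x0). rewrite E, (vnorm_zero _ X HV HN) in Hn.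
    assert (Rabs (t - s) = 0) by (apply (Rmult_eq_reg_r (vnorm x0)); lra).
    assert (t = s) by (apply Rminus_diag_uniq; destruct (Req_dec (t - s) 0) as [Z|Z]; [exact Z|pose proof (Rabs_pos_lt _ Z); lra]). subst; reflexivity.
  - intros y a z b [t Ht] [s Hs]. injection Ht as -> ->. injection Hs as -> ->.
    exists (t + s). rewrite (rscal_addl _ X HV). f_equal; ring.
  - intros y a u [t Ht]. injection Ht as -> ->. exists (u * t). rewrite (rscal_mul _ X HV). f_equal; ring.
  - intros y a [t Ht]. injection Ht as -> ->. rewrite (rscal_norm _ X HN).
    pose proof (Rle_abs t). nra.
  - exists 0. rewrite (rscal_0 _ X HV). f_equal; ring.
Qed.

(** The Zorn property: [G] together with the seed is a dominated graph.
    (Requiring [G] to contain the seed would fail for the empty chain.) *)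
Definition seeded (G : X * R -> Prop) : Prop :=
  dominated_graph (fun p => G p \/ seed_graph p).

Lemma seeded_chain (F : (X * R -> Prop) -> Prop) :
  (forall A, F A -> seeded A) ->
  (forall A B, F A -> F B -> (forall x, A x -> B x) \/ (forall x, B x -> A x)) ->
  seeded (fun p => exists2 A, F A & A p).
Proof.
  unfold seeded. intros HF Hchain. apply dominated_graph_pairwise; [right; apply seed_dominated|].
  assert (sub : forall A, F A -> forall r, A r \/ seed_graph r ->
                  (exists2 A, F A & A r) \/ seed_graph r).
  { intros A FA r [Ar|Gr]; [left; exists A; auto | right; auto]. }
  intros p q [[A FA Ap]|Gp] [[B FB Bq]|Gq].
  - destruct (Hchain A B FA FB) as [AB|BA].
    + exists (fun r => B r \/ seed_graph r). split; [|split; [|split]]; eauto using sub.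
    + exists (fun r => A r \/ seed_graph r). split; [|split; [|split]]; eauto using sub.
  - exists (fun r => A r \/ seed_graph r). split; [|split; [|split]]; eauto using sub.
  - exists (fun r => B r \/ seed_graph r). split; [|split; [|split]]; eauto using sub.
  - exists seed_graph. split; [|split; [|split]]; auto using seed_dominated.
Qed.

Lemma seed_maximal : exists M, dominated_graph M /\ (forall p, seed_graph p -> M p) /\
   forall B, (forall p, M p -> B p) -> dominated_graph B -> forall p, B p -> M p.
Proof.
  destruct (zorn_sets _ seeded seeded_chain) as [M [PM HM]].
  assert (seedM : forall p, seed_graph p -> M p).
  { intros p Gp. apply (HM (fun r => M r \/ seed_graph r)); auto.
    eapply dominated_graph_ext; [|exact PM]. intro r; tauto. }
  exists M. split; [|split; auto].
  - eapply dominated_graph_ext; [|exact PM]. intro r; split; [intros [|]; auto|auto].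
  - intros B MB VB. apply HM; auto. eapply dominated_graph_ext; [|exact VB].
    intro r; split; auto. intros [|]; auto.
Qed.

(** Real Hahn-Banach: a real-linear functional of norm at most 1 attaining
    [||x0||] at [x0]. A maximal dominated graph is total by the one-step
    extension. *)
Lemma hahn_banach_real : exists f : X -> R,
  (forall x y, f (vadd x y) = f x + f y) /\ (forall t x, f (rscal t x) = t * f x) /\
  (forall x, Rabs (f x) <= vnorm x) /\ f x0 = vnorm x0.
Proof.
  destruct seed_maximal as [M [HM [seedM maxM]]].
  assert (total : forall y, exists a, M (y, a)).
  { intro y. apply NNPP; intro Ny.
    assert (Hy : forall a, ~ M (y, a)) by (intros a Ha; apply Ny; eauto).
    destruct (extension_value M HM y) as [c [Hlow Hup]].
    apply Ny. exists c. apply (maxM (extension M y c)).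
    - apply extension_contains.
    - apply extension_dominated_graph; auto.
    - apply extension_new_point. apply HM. }
  destruct HM as [m1 [m2 [m3 [m4 m5]]]].
  set (f := fun y => proj1_sig (constructive_indefinite_description _ (total y))).
  assert (Hf : forall y, M (y, f y)).
  { intro y. unfold f. destruct constructive_indefinite_description; auto. }
  assert (fe : forall y a, M (y, a) -> f y = a) by eauto.
  exists f. split; [|split; [|split]].
  - intros x y. apply fe. apply m2; auto.
  - intros t x. apply fe. apply m3; auto.
  - intro x. unfold Rabs. destruct Rcase_abs.
    + pose proof (m4 _ _ (m3 _ _ (-1) (Hf x))).
      rewrite (rscal_m1 _ X HV), (vnorm_opp _ X HV HN) in H. lra.
    + apply m4; auto.
  - apply fe, seedM. exists 1. rewrite (rscal_1 _ X HV), Rmult_1_l. reflexivity.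
Qed.

End Seed.
End HahnBanach.

Lemma bounded_additive_lipschitz k (X : NormedSpace k) (HV : is_vector_space X)
  (f : X -> R) :
  (forall x y, f (vadd x y) = f x + f y) -> (forall t x, f (rscal k X t x) = t * f x) ->
  (forall x, Rabs (f x) <= vnorm x) ->
  forall x y, Rabs (f y - f x) <= vnorm (vadd y (vopp x)).
Proof.
  intros fadd fscal fbound x y.
  replace (f y - f x) with (f (vadd y (vopp x))); [apply fbound|].
  rewrite fadd, <- (rscal_m1 _ X HV), fscal. ring.
Qed.

Lemma real_functional (X : NormedSpace RealField) (HV : is_vector_space X) (f : X -> R) :
  (forall x y, f (vadd x y) = f x + f y) -> (forall t x, f (rscal RealField X t x) = t * f x) ->
  (forall x, Rabs (f x) <= vnorm x) ->
  continuous_linear_functional X f.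
Proof.
  intros fadd fscal fbound. split; [exact fadd|split; [exact fscal|]].
  intros x eps He. exists eps. split; auto. intros y Hy. simpl.
  pose proof (bounded_additive_lipschitz _ X HV f fadd fscal fbound x y). unfold Rminus in H. lra.
Qed.

(** Over C, the real part [f] determines the complex functional
    [phi y = f y - i f (i y)]. *)
Lemma complexify (X : NormedSpace ComplexField) (HV : is_vector_space X) (HN : is_norm X)
  (f : X -> R) :
  (forall x y, f (vadd x y) = f x + f y) -> (forall t x, f (rscal ComplexField X t x) = t * f x) ->
  (forall x, Rabs (f x) <= vnorm x) ->
  continuous_linear_functional X
    (fun y => Cplx (f y) (- f (vscal (Cplx 0 1 : scal ComplexField) y))).
Proof.
  intros fadd fscal fbound. set (i := (Cplx 0 1 : scal ComplexField)).
  assert (decompose : forall p q (y : X),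
    f (vscal (Cplx p q : scal ComplexField) y) = p * f y + q * f (vscal i y)).
  { intros p q y. replace (vscal (Cplx p q : scal ComplexField) y)
      with (vadd (rscal _ X p y) (rscal _ X q (vscal i y))).
    - rewrite fadd, !fscal. reflexivity.
    - unfold rscal. rewrite (vscal_mul _ X HV), <- (vscal_addl _ X HV). f_equal.
      simpl. unfold cadd, cmul, i; simpl. apply cplx_eq; ring. }
  split; [|split].
  - intros x y. simpl. rewrite (vscal_addr _ X HV), !fadd. unfold cadd; simpl. apply cplx_eq; ring.
  - intros [p q] x. simpl. rewrite (vscal_mul _ X HV).
    replace (kmul ComplexField i (Cplx p q : scal ComplexField))
      with (Cplx (- q) p : scal ComplexField) by (simpl; unfold cmul, i; simpl; apply cplx_eq; ring).
    rewrite !decompose. unfold cmul; simpl. apply cplx_eq; ring.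
  - intros x eps He. exists (eps / 2). split; [lra|]. intros y Hy. simpl.
    eapply Rle_lt_trans; [apply cabs_le|]. simpl.
    pose proof (bounded_additive_lipschitz _ X HV f fadd fscal fbound x y) as B1.
    pose proof (bounded_additive_lipschitz _ X HV f fadd fscal fbound (vscal i x) (vscal i y)) as B2.
    rewrite <- (vscal_opp _ X HV), <- (vscal_addr _ X HV), (vnorm_scal _ X HN) in B2.
    replace (kabs ComplexField i) with 1 in B2.
    2:{ simpl. unfold cabs, i; simpl. replace (0 * 0 + 1 * 1) with 1 by ring. symmetry; apply sqrt_1. }
    replace (f y + - f x) with (f y - f x) by ring.
    replace (- f (vscal i y) + - - f (vscal i x)) with (- (f (vscal i y) - f (vscal i x))) by ring.
    rewrite Rabs_Ropp. lra.
Qed.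

Lemma hahn_banach k (X : NormedSpace k) (HV : is_vector_space X) (HN : is_norm X)
  (x0 : X) : x0 <> vzero X ->
  exists phi, continuous_linear_functional X phi /\ kabs k (phi x0) > 0.
Proof.
  intro Hx0. pose proof (vnorm_pos _ X HV HN x0 Hx0) as Hpos.
  destruct (hahn_banach_real k X HV HN x0 Hx0) as [f [fadd [fscal [fbound fx0]]]].
  destruct k.
  - exists f. split; [apply real_functional; auto|].
    simpl. rewrite fx0, Rabs_pos_eq; lra.
  - eexists. split; [apply complexify; eauto|].
    simpl. eapply Rlt_le_trans; [|apply cabs_re]. rewrite fx0, Rabs_pos_eq; lra.
Qed.

(** ** Hamel bases *)

Section Hamel.
Variable k : field_kind.
Variable V : NormedSpace k.
Hypothesis HV : is_vector_space V.

Local Notation lc := (lincomb (vzero V) vadd vscal).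
Local Notation indep := (lin_indep (vzero V) vadd vscal).
Local Notation span := (in_span (vzero V) vadd vscal).

Definition veqb (x y : V) : bool := if excluded_middle_informative (x = y) then true else false.
Lemma veqb_spec x y : veqb x y = true <-> x = y.
Proof. unfold veqb; destruct excluded_middle_informative; split; congruence. Qed.

Lemma lc_filter_split (f : scal k * V -> bool) l :
  lc l = vadd (lc (filter f l)) (lc (filter (fun p => negb (f p)) l)).
Proof.
  induction l as [|p l IH]; simpl.
  - rewrite (vadd_0r _ V HV). reflexivity.
  - destruct (f p); simpl; rewrite IH.
    + apply (vadd_assoc _ V HV).
    + rewrite (vadd_assoc _ V HV), (vadd_comm _ V HV (vscal _ _)), <- (vadd_assoc _ V HV). reflexivity.
Qed.

Lemma lc_scal a l : vscal a (lc l) = lc (map (fun p => (kmul k a (fst p), snd p)) l).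
Proof.
  induction l as [|p l IH]; simpl.
  - apply (vscal_v0 _ V HV).
  - rewrite (vscal_addr _ V HV), IH, (vscal_mul _ V HV). reflexivity.
Qed.

Lemma lc_single_vector x l : Forall (fun p => snd p = x) l ->
  lc l = vscal (fold_right (kadd k) (kzero k) (map fst l)) x.
Proof.
  induction l as [|p l IH]; simpl; intro H.
  - symmetry; apply (vscal_0 _ V HV).
  - inversion H; subst. rewrite IH by auto. rewrite (vscal_addl _ V HV). reflexivity.
Qed.

Lemma nodup_map_filter {A B} (g : A -> B) (f : A -> bool) l :
  NoDup (map g l) -> NoDup (map g (filter f l)).
Proof.
  induction l as [|a l IH]; simpl; intro H; auto.
  inversion H; subst. destruct (f a); simpl; auto.
  constructor; auto. intro Hin. apply H2. apply in_map_iff in Hin. destruct Hin as [b [E Hb]].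
  apply filter_In in Hb. apply in_map_iff. exists b; split; tauto.
Qed.

Lemma nodup_single_vector x (l : list (scal k * V)) :
  NoDup (map snd l) -> Forall (fun p => snd p = x) l -> l = nil \/ exists p, l = p :: nil.
Proof.
  intros N F. destruct l as [|p [|q l]]; [left; auto|right; exists p; auto|].
  exfalso. inversion F; subst. inversion H2; subst. simpl in N. inversion N; subst.
  apply H4. simpl. left. congruence.
Qed.

Lemma coefficient_outside_span (A : V -> Prop) x c l :
  ~ span A x -> Forall (fun p => A (snd p)) l ->
  vadd (vscal c x) (lc l) = vzero V -> c = kzero k.
Proof.
  intros NS F E. apply NNPP; intro Nc. destruct (kinv k c Nc) as [d Hd]. apply NS.
  exists (map (fun p => (kmul k (kmul k (kopp k (kone k)) d) (fst p), snd p)) l). split.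
  - rewrite Forall_forall in *. intros p Hp. apply in_map_iff in Hp. destruct Hp as [q [<- Hq]].
    simpl. apply F; auto.
  - rewrite <- lc_scal, <- (vscal_mul _ V HV), <- (vopp_scal _ V HV), <- (vscal_opp _ V HV).
    rewrite (vadd_comm _ V HV) in E.
    rewrite <- (vopp_unique _ V HV _ _ E), (vscal_mul _ V HV), Hd. symmetry. apply (vscal_1 _ V HV).
Qed.

Lemma indep_adjoin (A : V -> Prop) (x : V) :
  indep A -> ~ span A x -> indep (fun y => A y \/ y = x).
Proof.
  intros IA NS l N F E.
  set (f := fun p : scal k * V => veqb (snd p) x).
  set (l2 := filter f l). set (l1 := filter (fun p => negb (f p)) l).
  assert (F1 : Forall (fun p => A (snd p)) l1).
  { apply Forall_forall. intros p Hp. unfold l1 in Hp. apply filter_In in Hp. destruct Hp as [Hp Hf].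
    rewrite Forall_forall in F. destruct (F p Hp) as [|Ex]; auto.
    unfold f in Hf. apply veqb_spec in Ex. rewrite Ex in Hf. discriminate. }
  assert (F2 : Forall (fun p => snd p = x) l2).
  { apply Forall_forall. intros p Hp. unfold l2 in Hp. apply filter_In in Hp. apply veqb_spec. apply Hp. }
  set (c := fold_right (kadd k) (kzero k) (map fst l2)).
  assert (E2 : vadd (vscal c x) (lc l1) = vzero V).
  { rewrite (lc_filter_split f l) in E. fold l1 l2 in E. rewrite (lc_single_vector x l2 F2) in E. exact E. }
  assert (Hc : c = kzero k) by (eapply coefficient_outside_span; eauto).
  assert (Z1 : Forall (fun p => fst p = kzero k) l1).
  { apply IA; auto. unfold l1. apply nodup_map_filter; auto.
    rewrite Hc, (vscal_0 _ V HV), (vadd_0l _ V HV) in E2. exact E2. }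
  assert (Z2 : Forall (fun p => fst p = kzero k) l2).
  { destruct (nodup_single_vector x l2) as [->|[p Ep]]; auto. unfold l2; apply nodup_map_filter; auto.
    unfold c in Hc. rewrite Ep in Hc. simpl in Hc. rewrite Ep. constructor; auto.
    rewrite <- Hc. symmetry; apply kadd_0r. }
  apply Forall_forall. intros p Hp. destruct (f p) eqn:Hf.
  - rewrite Forall_forall in Z2. apply Z2. unfold l2. apply filter_In; auto.
  - rewrite Forall_forall in Z1. apply Z1. unfold l1. apply filter_In; split; auto. rewrite Hf; auto.
Qed.

Lemma chain_list (F : (V -> Prop) -> Prop)
  (Ht : forall A B, F A -> F B -> (forall x, A x -> B x) \/ (forall x, B x -> A x))
  (l : list (scal k * V)) :
  Forall (fun p => exists2 A, F A & A (snd p)) l ->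
  l = nil \/ exists2 A, F A & Forall (fun p => A (snd p)) l.
Proof.
  induction l as [|p l IH]; intro H; [left; auto|right].
  inversion H; subst. destruct H2 as [A1 FA1 HA1]. destruct (IH H3) as [->|[A2 FA2 HA2]].
  - exists A1; auto.
  - destruct (Ht A1 A2 FA1 FA2) as [S|S].
    + exists A2; auto.
    + exists A1; auto. constructor; auto. eapply Forall_impl; [|exact HA2]. simpl; auto.
Qed.

(** Every subset [W] has a Hamel basis: a maximal independent subset (Zorn). *)
Lemma hamel_exists (W : V -> Prop) : exists B, is_hamel_basis (vzero V) vadd vscal W B.
Proof.
  set (P := fun B : V -> Prop => (forall x, B x -> W x) /\ indep B).
  destruct (zorn_sets V P) as [A [[AW IA] HA]].
  - intros F HF Ht. split.
    + intros x [A FA Ax]. apply (HF A FA); auto.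
    + intros l N Fl E. destruct (chain_list F Ht l Fl) as [->|[A FA HA]]; auto.
      apply (HF A FA); auto.
  - exists A. split; [|split]; auto. intros x Wx. apply NNPP; intro NS.
    assert (Ax : A x).
    { apply (HA (fun y => A y \/ y = x)); auto. split.
      - intros y [|<-]; auto.
      - apply indep_adjoin; auto. }
    apply NS. exists ((kone k, x) :: nil). split.
    + constructor; auto.
    + simpl. rewrite (vadd_0r _ V HV), (vscal_1 _ V HV). reflexivity.
Qed.

Lemma NoDup_map_on {A B} (f : A -> B) (l : list A) :
  (forall x y, In x l -> In y l -> f x = f y -> x = y) -> NoDup l -> NoDup (map f l).
Proof.
  induction l as [|a l IH]; simpl; intros Hi N; constructor.
  - intro Hin. apply in_map_iff in Hin. destruct Hin as [b [E Hb]].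
    inversion N; subst. apply H1. rewrite <- (Hi b a); auto.
  - apply IH; auto. inversion N; auto.
Qed.

Lemma sig_eq_pi {A} (P : A -> Prop) x y (px : P x) (py : P y) :
  x = y -> exist P x px = exist P y py.
Proof. intros ->. f_equal. apply proof_irrelevance. Qed.

Lemma map_lincomb (L : V -> V) :
  L (vzero V) = vzero V -> (forall u v, L (vadd u v) = vadd (L u) (L v)) ->
  (forall a u, L (vscal a u) = vscal a (L u)) ->
  forall l, L (lc l) = lc (map (fun p => (fst p, L (snd p))) l).
Proof.
  intros L0 Ladd Lscal l. induction l as [|p l IH]; simpl; [exact L0|].
  rewrite Ladd, Lscal, IH. reflexivity.
Qed.

Section Transport.
Variables T Tinv : V -> V.
Hypothesis T_add : forall u v, T (vadd u v) = vadd (T u) (T v).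
Hypothesis T_scal : forall a u, T (vscal a u) = vscal a (T u).
Hypothesis T_zero : T (vzero V) = vzero V.
Hypothesis Tinv_add : forall u v, Tinv (vadd u v) = vadd (Tinv u) (Tinv v).
Hypothesis Tinv_scal : forall a u, Tinv (vscal a u) = vscal a (Tinv u).
Hypothesis Tinv_zero : Tinv (vzero V) = vzero V.
Hypothesis Tinv_T : forall u, Tinv (T u) = u.
Variable U : V -> Prop.

Definition image (v : V) : Prop := exists u, U u /\ v = T u.

(** [T] maps a Hamel basis [B] of [U] onto a Hamel basis of [image], and this
    correspondence is a bijection, inverted by [Tinv]. *)
Lemma same_dim_image : same_dim (vzero V) vadd vscal image U.
Proof.
  destruct (hamel_exists U) as [B [BU [Bindep Bspan]]].
  set (TB := fun v => exists b, B b /\ v = T b).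
  assert (TB_Tinv : forall x, TB x -> B (Tinv x)) by (intros x [b [Hb ->]]; rewrite Tinv_T; auto).
  assert (TB_TTinv : forall x, TB x -> T (Tinv x) = x) by (intros x [b [Hb ->]]; rewrite Tinv_T; auto).
  exists TB, B. split; [|split; [split; auto|]].
  - split; [|split].
    + intros x [b [Hb ->]]. exists b; auto.
    + intros l N F E.
      set (l' := map (fun p => (fst p, Tinv (snd p))) l).
      assert (Z : Forall (fun p => fst p = kzero k) l').
      { apply Bindep.
        - unfold l'. rewrite map_map. simpl. rewrite <- (map_map snd Tinv).
          apply NoDup_map_on; auto. intros x y Hx Hy Exy.
          rewrite Forall_forall in F. apply in_map_iff in Hx, Hy.
          destruct Hx as [px [<- Hpx]]. destruct Hy as [py [<- Hpy]].
          rewrite <- (TB_TTinv _ (F px Hpx)), <- (TB_TTinv _ (F py Hpy)), Exy. reflexivity.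
        - unfold l'. rewrite Forall_forall in *. intros p Hp. apply in_map_iff in Hp.
          destruct Hp as [q [<- Hq]]. simpl. apply TB_Tinv. apply F; auto.
        - unfold l'. rewrite <- map_lincomb, E; auto. }
      unfold l' in Z. rewrite Forall_map in Z. exact Z.
    + intros x [u [Hu ->]]. destruct (Bspan u Hu) as [l [F E]].
      exists (map (fun p => (fst p, T (snd p))) l). split.
      * rewrite Forall_forall in *. intros p Hp. apply in_map_iff in Hp.
        destruct Hp as [q [<- Hq]]. simpl. exists (snd q); auto.
      * rewrite <- map_lincomb, E; auto.
  - exists (fun a => exist B (Tinv (proj1_sig a)) (TB_Tinv _ (proj2_sig a))). split.
    + intros [a [b [Hb Ea]]] [a' [b' [Hb' Ea']]] E. apply (f_equal (@proj1_sig _ _)) in E. simpl in E.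
      apply sig_eq_pi. subst a a'. rewrite !Tinv_T in E. congruence.
    + intros [b Hb]. assert (Hb1 : TB (T b)) by (exists b; auto).
      exists (exist TB (T b) Hb1). apply sig_eq_pi. simpl. apply Tinv_T.
Qed.

End Transport.
End Hamel.

(** ** The weight [alpha i = exp (- sqrt (ln (i + 1)))] *)

Definition alpha (i : nat) : R := exp (- sqrt (ln (INR i + 1))).

Lemma exp_le_mono x y : x <= y -> exp x <= exp y.
Proof. intro H. destruct (Req_dec x y) as [->|N]; [lra|]. left. apply exp_increasing. lra. Qed.
Lemma ln_le_mono x y : 0 < x -> x <= y -> ln x <= ln y.
Proof. intros H1 H. destruct (Req_dec x y) as [->|N]; [lra|]. left. apply ln_increasing; lra. Qed.

Lemma ln_INR_nonneg i : 0 <= ln (INR i + 1).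
Proof. rewrite <- ln_1. apply ln_le_mono; [lra|]. pose proof (pos_INR i); lra. Qed.

Lemma alpha_0 : alpha 0 = 1.
Proof. unfold alpha. simpl. replace (0 + 1) with 1 by ring. rewrite ln_1, sqrt_0, Ropp_0. apply exp_0. Qed.
Lemma alpha_pos i : 0 < alpha i.
Proof. apply exp_pos. Qed.
Lemma alpha_le1 i : alpha i <= 1.
Proof.
  unfold alpha. rewrite <- exp_0 at 2. apply exp_le_mono.
  pose proof (sqrt_pos (ln (INR i + 1))); lra.
Qed.
Lemma alpha_mono i i' : (i <= i')%nat -> alpha i' <= alpha i.
Proof.
  intro H. unfold alpha. apply exp_le_mono, Ropp_le_contravar, sqrt_le_1_alt, ln_le_mono.
  - pose proof (pos_INR i); lra.
  - apply le_INR in H. lra.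
Qed.

Lemma sqrt_ln_unbounded K : exists M : nat, K <= sqrt (ln (INR M + 1)).
Proof.
  destruct (INR_unbounded (exp (K * K))) as [M HM]. exists M.
  destruct (Rle_dec K 0) as [Kn|Kp]. { pose proof (sqrt_pos (ln (INR M + 1))); lra. }
  rewrite <- (sqrt_Rsqr K) by lra. apply sqrt_le_1_alt. unfold Rsqr.
  rewrite <- (ln_exp (K * K)). apply ln_le_mono. apply exp_pos. lra.
Qed.

Lemma alpha_lim d : d > 0 -> exists I, forall i, (I <= i)%nat -> alpha i < d.
Proof.
  intro Hd. destruct (sqrt_ln_unbounded (Rabs (ln d) + 1)) as [I HI]. exists I. intros i Hi.
  pose proof (alpha_mono _ _ Hi). unfold alpha at 2 in H.
  assert (exp (- sqrt (ln (INR I + 1))) < d).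
  { rewrite <- (exp_ln d) by lra. apply exp_increasing.
    pose proof (Rle_abs (- ln d)). rewrite Rabs_Ropp in H0. lra. }
  lra.
Qed.

Lemma alpha_slow_decay p c B : p > 0 -> c > 0 -> exists M : nat,
  (INR M + 1) * Rpower (alpha M * c) p > B.
Proof.
  intros Hp Hc. set (B' := Rmax B 1).
  set (K := p + Rabs (p * ln c) + Rabs (ln B') + 1).
  destruct (sqrt_ln_unbounded K) as [M HM]. exists M.
  set (L := ln (INR M + 1)). set (s := sqrt L).
  assert (HL : 0 <= L) by apply ln_INR_nonneg.
  assert (Hs2 : s * s = L) by (apply sqrt_sqrt; auto).
  assert (HK : K >= p + 1)
    by (unfold K; pose proof (Rabs_pos (p * ln c)); pose proof (Rabs_pos (ln B')); lra).
  fold L s in HM.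
  unfold Rpower. rewrite ln_mult by (auto using alpha_pos). unfold alpha. rewrite ln_exp. fold L s.
  rewrite <- (exp_ln (INR M + 1)) by (pose proof (pos_INR M); lra). fold L.
  rewrite <- exp_plus.
  assert (B <= B') by apply Rmax_l. assert (HB' : 0 < B') by (unfold B'; pose proof (Rmax_r B 1); lra).
  rewrite <- (exp_ln B') in H by auto.
  assert (ln B' < L + p * (- s + ln c)).
  { rewrite <- Hs2. pose proof (Rle_abs (- (p * ln c))). rewrite Rabs_Ropp in H0.
    pose proof (Rle_abs (ln B')).
    assert (s * s - p * s >= K * K - p * K) by nra.
    assert (K * K - p * K >= K - p) by nra.
    unfold K in *. nra. }
  pose proof (exp_increasing _ _ H0). lra.
Qed.

Lemma sum_without f a N : (a <= N)%nat ->
  sum_f_R0 (fun n => if Nat.eq_dec n a then 0 else f n) N = sum_f_R0 f N - f a.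
Proof.
  intro H. induction N.
  - assert (a = 0%nat) by lia. subst. simpl. destruct (Nat.eq_dec 0 0); [ring|congruence].
  - rewrite !tech5. destruct (Nat.eq_dec a (S N)) as [->|Na].
    + destruct (Nat.eq_dec (S N) (S N)); [|congruence].
      rewrite (sum_eq _ f); [ring|].
      intros i Hi. destruct (Nat.eq_dec i (S N)); [lia|auto].
    + rewrite IHN by lia. destruct (Nat.eq_dec (S N) a); [lia|]. ring.
Qed.

Lemma sum_reindex_le f g M N : (forall n, 0 <= f n) ->
  (forall i, (i <= M)%nat -> (g i <= N)%nat) ->
  (forall i i', (i <= M)%nat -> (i' <= M)%nat -> g i = g i' -> i = i') ->
  sum_f_R0 (fun i => f (g i)) M <= sum_f_R0 f N.
Proof.
  revert f. induction M; intros f Hf Hb Hi.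
  - simpl. rewrite <- (Rminus_0_r (f (g 0%nat))).
    pose proof (sum_without f (g 0%nat) N (Hb 0%nat (le_n _))) as E.
    assert (0 <= sum_f_R0 (fun n => if Nat.eq_dec n (g 0%nat) then 0 else f n) N).
    { apply cond_pos_sum. intro n. destruct Nat.eq_dec; [lra|auto]. }
    lra.
  - set (f' := fun n => if Nat.eq_dec n (g (S M)) then 0 else f n).
    simpl. rewrite (sum_eq _ (fun i => f' (g i))).
    + assert (sum_f_R0 (fun i => f' (g i)) M <= sum_f_R0 f' N).
      { apply IHM; auto. intro n; unfold f'; destruct Nat.eq_dec; auto; lra. }
      unfold f' in H at 2. rewrite sum_without in H by auto. lra.
    + intros i Hi'. unfold f'. destruct Nat.eq_dec; auto.
      assert (i = S M) by (apply Hi; auto; lia). lia.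
Qed.

Lemma partial_sum_le_limit f l : (forall n, 0 <= f n) ->
  Un_cv (fun N => sum_f_R0 f N) l -> forall N, sum_f_R0 f N <= l.
Proof.
  intros Hf Hl. apply growing_ineq; auto. intro N. rewrite tech5. pose proof (Hf (S N)); lra.
Qed.

(** ** The embedding of c_0(X) into itself *)

Section Embedding.
Variable k : field_kind.
Variable X : NormedSpace k.
Hypothesis HV : is_vector_space X.
Hypothesis HN : is_norm X.

(** The vector space of all [X]-valued sequences (its norm is irrelevant). *)
Definition seq_space : NormedSpace k :=
  {| carrier := nat -> X; vzero := seq_zero X; vadd := seq_add;
     vopp := fun u n => vopp (u n); vscal := seq_scal; vnorm := fun _ => 0 |}.

Lemma seq_space_vector_space : is_vector_space seq_space.
Proof.
  unfold is_vector_space; simpl; unfold seq_add, seq_scal, seq_zero.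
  repeat split; intros; apply functional_extensionality; intro n.
  - apply (vadd_assoc _ X HV).
  - apply (vadd_comm _ X HV).
  - apply (vadd_0r _ X HV).
  - apply (vadd_oppr _ X HV).
  - apply (vscal_mul _ X HV).
  - apply (vscal_1 _ X HV).
  - apply (vscal_addr _ X HV).
  - apply (vscal_addl _ X HV).
Qed.

(** [spread u (i, j) = alpha i * u j], with N x N enumerated by Cantor's pairing. *)
Definition spread (u : nat -> X) : nat -> X :=
  fun m => vscal (kreal k (alpha (fst (of_nat m)))) (u (snd (of_nat m))).

(** The left inverse: read off the row [i = 0], where [alpha 0 = 1]. *)
Definition unspread (v : nat -> X) : nat -> X := fun j => v (to_nat (0%nat, j)).

Lemma unspread_spread u : unspread (spread u) = u.
Proof.
  apply functional_extensionality; intro j. unfold unspread, spread. rewrite cancel_of_to. simpl.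
  rewrite alpha_0, kreal_one. apply (vscal_1 _ X HV).
Qed.

Lemma spread_add u v : spread (seq_add u v) = seq_add (spread u) (spread v).
Proof. apply functional_extensionality; intro m. apply (vscal_addr _ X HV). Qed.
Lemma spread_scal a u : spread (seq_scal a u) = seq_scal a (spread u).
Proof.
  apply functional_extensionality; intro m. unfold spread, seq_scal.
  rewrite !(vscal_mul _ X HV), kmul_comm. reflexivity.
Qed.
Lemma spread_zero : spread (seq_zero X) = seq_zero X.
Proof. apply functional_extensionality; intro m. apply (vscal_v0 _ X HV). Qed.

Lemma c0_zero : in_c0 X (seq_zero X).
Proof. intros eps He. exists 0%nat. intros. unfold seq_zero. rewrite (vnorm_zero _ X HV HN). lra. Qed.

Lemma c0_add u v : in_c0 X u -> in_c0 X v -> in_c0 X (seq_add u v).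
Proof.
  intros Hu Hv eps He. destruct (Hu (eps/2) ltac:(lra)) as [N1 H1]. destruct (Hv (eps/2) ltac:(lra)) as [N2 H2].
  exists (max N1 N2). intros n Hn. unfold seq_add. pose proof (vnorm_triangle _ X HN (u n) (v n)).
  specialize (H1 n ltac:(lia)). specialize (H2 n ltac:(lia)). lra.
Qed.

Lemma c0_scal a u : in_c0 X u -> in_c0 X (seq_scal a u).
Proof.
  intros Hu eps He. pose proof (kabs_nonneg k a) as Ha.
  destruct (Hu (eps / (kabs k a + 1))) as [N HN'].
  { apply Rdiv_lt_0_compat; lra. }
  exists N. intros n Hn. unfold seq_scal. rewrite (vnorm_scal _ X HN). specialize (HN' n Hn).
  pose proof (vnorm_nonneg _ X HV HN (u n)).
  apply Rle_lt_trans with ((kabs k a + 1) * vnorm (u n)); [nra|].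
  apply Rmult_lt_compat_l with (r := kabs k a + 1) in HN'; [|lra].
  replace ((kabs k a + 1) * (eps / (kabs k a + 1))) with eps in HN' by (field; lra). exact HN'.
Qed.

Lemma c0_bounded u : in_c0 X u -> exists M, M > 0 /\ forall j, vnorm (u j) <= M.
Proof.
  intro Hu. destruct (Hu 1 ltac:(lra)) as [N HN'].
  assert (initial : forall N, exists M, forall j, (j < N)%nat -> vnorm (u j) <= M).
  { induction N0 as [|N0 [M HM]].
    - exists 0. intros; lia.
    - exists (Rmax M (vnorm (u N0))). intros j Hj. destruct (Nat.eq_dec j N0) as [->|Nj].
      + apply Rmax_r.
      + eapply Rle_trans; [apply HM; lia|apply Rmax_l]. }
  destruct (initial N) as [M HM]. exists (Rmax M 1 + 1). split.
  - pose proof (Rmax_r M 1); lra.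
  - intro j. destruct (Nat.lt_ge_cases j N) as [L|L].
    + pose proof (HM j L). pose proof (Rmax_l M 1). lra.
    + pose proof (HN' j L). pose proof (Rmax_r M 1). lra.
Qed.

(** For [m = (i, j)] beyond the Cantor index of [(I, J)], [i >= I] or [j >= J]. *)
Lemma to_nat_bound i j I J : (i < I)%nat -> (j < J)%nat ->
  (to_nat (i, j) < J + (I + J) * (I + J + 1))%nat.
Proof. intros Hi Hj. pose proof (to_nat_spec i j). nia. Qed.

(** Far out, either the column index is large ([u j] small) or the row index
    is large ([alpha i] small while [u] is bounded). *)
Lemma spread_c0 u : in_c0 X u -> in_c0 X (spread u).
Proof.
  intros Hu eps He. destruct (c0_bounded u Hu) as [M [HM HMb]].
  destruct (alpha_lim (eps / M)) as [I HI]. { apply Rdiv_lt_0_compat; lra. }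
  destruct (Hu eps He) as [J HJ].
  exists (J + (I + J) * (I + J + 1))%nat. intros m Hm. unfold spread.
  destruct (of_nat m) as [i j] eqn:Em. simpl.
  rewrite (vnorm_scal _ X HN), kabs_kreal, Rabs_pos_eq by (left; apply alpha_pos).
  pose proof (vnorm_nonneg _ X HV HN (u j)). pose proof (alpha_pos i). pose proof (alpha_le1 i).
  destruct (Nat.lt_ge_cases i I) as [Li|Li].
  - destruct (Nat.lt_ge_cases j J) as [Lj|Lj].
    + exfalso. pose proof (to_nat_bound i j I J Li Lj). rewrite <- Em, cancel_to_of in H2. lia.
    + pose proof (HJ j Lj). nra.
  - pose proof (HI i Li). pose proof (HMb j).
    apply Rle_lt_trans with (alpha i * M); [nra|].
    apply Rmult_lt_compat_r with (r := M) in H2; auto.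
    replace (eps / M * M) with eps in H2 by (field; lra). exact H2.
Qed.

Lemma unspread_c0 v : in_c0 X v -> in_c0 X (unspread v).
Proof.
  intros Hv eps He. destruct (Hv eps He) as [N HN']. exists N. intros n Hn. unfold unspread.
  apply HN'. pose proof (to_nat_non_decreasing 0 n). lia.
Qed.

Definition W : (nat -> X) -> Prop := image k seq_space spread (in_c0 X).

(** The identity [v (i, j) = alpha i * v (0, j)] characterizing [W] passes to
    uniform limits. *)
Lemma spread_unspread_limit w v : (forall n, W (w n)) -> sup_cv w v -> spread (unspread v) = v.
Proof.
  intros Hw Hc. apply functional_extensionality; intro m. apply (vnorm_small_eq _ X HV HN).
  intros eps He. destruct (Hc (eps / 2) ltac:(lra)) as [N HN']. specialize (HN' N (le_n _)).
  destruct (Hw N) as [u [Hu Ew]].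
  unfold spread at 1, unspread. destruct (of_nat m) as [i j] eqn:Em. cbn [fst snd].
  set (q := to_nat (0%nat, j)). set (a := kreal k (alpha i)).
  assert (E1 : w N m = vscal a (w N q)).
  { rewrite Ew. unfold spread. rewrite Em. unfold q. rewrite cancel_of_to. simpl.
    rewrite alpha_0, kreal_one, (vscal_1 _ X HV). reflexivity. }
  eapply Rle_trans; [apply (vnorm_sub_triangle _ X HV HN _ (w N m))|].
  pose proof (HN' m) as H1. pose proof (HN' q) as H2.
  rewrite E1 at 1. rewrite <- (vsub_scal _ X HV), (vnorm_scal _ X HN), (vnorm_sub_sym _ X HV HN (v q)).
  unfold a. rewrite kabs_kreal, Rabs_pos_eq by (left; apply alpha_pos).
  pose proof (alpha_le1 i). pose proof (alpha_pos i).
  pose proof (vnorm_nonneg _ X HV HN (vadd (w N q) (vopp (v q)))). nra.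
Qed.

Lemma W_closed : closed_subspace_c0 X W.
Proof.
  split; [|split; [|split; [|split]]].
  - intros v [u [Hu ->]]. apply spread_c0; auto.
  - exists (seq_zero X). split; [apply c0_zero|symmetry; apply spread_zero].
  - intros v v' [u [Hu ->]] [u' [Hu' ->]]. exists (seq_add u u').
    split; [apply c0_add; auto|symmetry; apply spread_add].
  - intros a v [u [Hu ->]]. exists (seq_scal a u). split; [apply c0_scal; auto|symmetry; apply spread_scal].
  - intros w v Hw Hv Hc. exists (unspread v). split; [apply unspread_c0; auto|].
    symmetry. apply (spread_unspread_limit w); auto.
Qed.

Lemma rpow_nonneg a p : 0 <= rpow a p.
Proof. unfold rpow. destruct Rle_dec; [lra|]. unfold Rpower. left; apply exp_pos. Qed.

Lemma spread_column_term phi u p i j : continuous_linear_functional X phi ->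
  kabs k (phi (u j)) > 0 ->
  rpow (kabs k (phi (spread u (to_nat (i, j))))) p = Rpower (alpha i * kabs k (phi (u j))) p.
Proof.
  intros [_ [phi_scal _]] Hc. unfold spread. rewrite cancel_of_to. simpl.
  rewrite phi_scal, kabs_mul, kabs_kreal, Rabs_pos_eq by (left; apply alpha_pos).
  unfold rpow. destruct Rle_dec as [r|r]; auto.
  pose proof (alpha_pos i). exfalso. nra.
Qed.

(** If [u j <> 0] and [phi (u j) <> 0], the first [M + 1] terms of column [j]
    already sum to at least [(M + 1) (alpha M |phi (u j)|)^p], which is
    unbounded by [alpha_slow_decay]. *)
Lemma spread_not_weakly_summable u : spread u <> seq_zero X ->
  ~ exists p, p > 0 /\ weakly_p_summable X p (spread u).
Proof.
  intros Hne [p [Hp Hw]].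
  assert (Ex : exists j, u j <> vzero X).
  { apply NNPP; intro N. apply Hne, functional_extensionality; intro m.
    unfold spread, seq_zero. apply NNPP; intro N2. apply N. exists (snd (of_nat m)).
    intro E. apply N2. rewrite E. apply (vscal_v0 _ X HV). }
  destruct Ex as [j Hj].
  destruct (hahn_banach k X HV HN (u j) Hj) as [phi [Hphi Hc]].
  destruct (Hw phi Hphi) as [l Hl].
  set (c := kabs k (phi (u j))) in *.
  set (t := fun n => rpow (kabs k (phi (spread u n))) p) in *.
  assert (tn : forall n, 0 <= t n) by (intro; apply rpow_nonneg).
  destruct (alpha_slow_decay p c l Hp Hc) as [M HM].
  assert (Hcol : sum_f_R0 (fun i => t (to_nat (i, j))) M <= sum_f_R0 t (to_nat (M, j))).
  { apply sum_reindex_le; auto.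
    - intros i Hi. pose proof (to_nat_spec i j). pose proof (to_nat_spec M j). nia.
    - intros i i' _ _ E. apply to_nat_inj in E. congruence. }
  assert (Hlow : sum_f_R0 (fun _ => Rpower (alpha M * c) p) M
                 <= sum_f_R0 (fun i => t (to_nat (i, j))) M).
  { apply sum_Rle. intros i Hi. unfold t. rewrite spread_column_term by auto. fold c.
    apply Rle_Rpower_l; [lra|].
    pose proof (alpha_pos M). pose proof (alpha_mono i M Hi). split; nra. }
  rewrite sum_cte, S_INR in Hlow.
  pose proof (partial_sum_le_limit t l tn Hl (to_nat (M, j))). lra.
Qed.

End Embedding.

Theorem corollary1 (k : field_kind) (X : NormedSpace k)
  (HX : is_banach X) (Hinf : infinite_dimensional X) :
  maximal_spaceable_c0 X (c0_minus_weak X).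
Proof.
  destruct HX as [HV [HN _]].
  exists (W k X). split; [|split].
  - apply W_closed; auto.
  - intros v [u [Hu ->]]. destruct (classic (spread k X u = seq_zero X)) as [E|E].
    + right; exact E.
    + left. split; [apply spread_c0; auto|]. apply spread_not_weakly_summable; auto.
  - apply (same_dim_image k (seq_space k X) (seq_space_vector_space k X HV)
             (spread k X) (unspread k X)).
    + apply spread_add; auto.
    + apply spread_scal; auto.
    + apply spread_zero; auto.
    + reflexivity.
    + reflexivity.
    + reflexivity.
    + apply unspread_spread; auto.
Qed.
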